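(* In the setting of the context, fix $\varepsilon\in(0,1]$ and $x\in\mathbb{X}$, let $P_x(s)=|\psi_x^+(s,\varepsilon)\rangle\langle\psi_x^+(s,\varepsilon)|$, $N_x=\|\,|\Psi_x^+(s,\varepsilon)\rangle\|$ (independent of $s$), and $$X_x(s)=\frac{\pi}{2N_x}\,|\Psi_x^-(s,\varepsilon)\rangle\langle\psi_x^+(s,\varepsilon)|,\qquad s\in[0,1].$$ Then $[H_x(s,\varepsilon),X_x(s)]=H_x(s,\varepsilon)X_x(s)=\dot P_x(s)P_x(s)$ for all $s\in[0,1]$ (dot denotes $\partial_s$). If moreover $W\ge\varepsilon/2$, then for all $s\in[0,1]$ $$\|X_x(s)\|\le\frac{\pi\sqrt5}{2}\,\frac{W}{\varepsilon},\qquad \|\dot X_x(s)P_x(s)\|\le\frac{\pi^2}{\sqrt2}\,\frac{W}{\varepsilon},$$ and in particular $2\|X_x(s)\|+\|\dot X_x(s)P_x(s)\|\le 15\,W/\varepsilon$.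
   Context: Setting (construction of AdiaConvert). Let $\Sigma$ be finite, $\bar 0\notin\Sigma$, $n\ge1$, $\mathbb{X}\subseteq\Sigma^n$, and $\rho,\sigma$ the Gram matrices of unit vectors $|\rho_x\rangle,|\sigma_x\rangle\in\mathbb{C}^d$ ($x\in\mathbb X$). For $j\in[n]$, $(\Delta_j)_{x,y}=1-\delta_{x_j,y_j}$. Let $W=\mathrm{Adv}^\star(\rho,\sigma)$, where $\mathrm{Adv}^\star(\rho,\sigma)=\max_\Gamma\|\Gamma\circ(\rho-\sigma)\|$ over Hermitian $\Gamma$ with $\|\Gamma\circ\Delta_j\|\le1$ for all $j$ ($\circ$ = entrywise product); assume $W>0$. Fix $m$ and vectors $u_{x,i},v_{x,i}\in\mathbb{C}^m$ ($x\in\mathbb X$, $i\in[n]$) such that $\rho_{x,y}-\sigma_{x,y}=\sum_i(\Delta_i)_{x,y}\langle u_{x,i}|v_{y,i}\rangle$ for all $x,y$, and $\sum_i\|u_{x,i}\|^2\le W$, $\sum_i\|v_{x,i}\|^2\le W$ for all $x$. Hilbert space: $\mathcal H=\mathcal H_{\mathcal O}\oplus(\mathcal H_{\mathcal Q}\otimes\mathcal H_{\mathcal W})$ (orthogonal direct sum) with $\mathcal H_{\mathcal O}=\mathbb{C}^2\otimes\mathbb{C}^d$, $\mathcal H_{\mathcal Q}=\mathbb{C}^n\otimes\mathbb{C}^{\Sigma\cup\{\bar0\}}$ (orthonormal basis $|i,y\rangle$), $\mathcal H_{\mathcal W}=\mathbb{C}^m$. For $y\in\Sigma$, $|y^\pm\rangle=\frac1{\sqrt2}(|\bar0\rangle\pm|y\rangle)$.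 Let $\theta(s)=\frac{\pi}{2}s$, $\xi(s)=2\cos\theta(s)\sin\theta(s)$, $|k_x^+(s)\rangle=\cos\theta(s)|0,\rho_x\rangle+\sin\theta(s)|1,\sigma_x\rangle$, $|k_x^-(s)\rangle=-\sin\theta(s)|0,\rho_x\rangle+\cos\theta(s)|1,\sigma_x\rangle$ (in $\mathcal H_{\mathcal O}$), $|\Psi_x^+(s,\varepsilon)\rangle=|k_x^+(s)\rangle+\frac{\varepsilon}{\sqrt W}\sum_i|i,x_i^+\rangle|u_{x,i}\rangle$, $|\Psi_x^-(s,\varepsilon)\rangle=|k_x^-(s)\rangle+\xi(s)\frac{\sqrt W}{\varepsilon}\sum_i|i,x_i^-\rangle|v_{x,i}\rangle$, $|\psi_x^+(s,\varepsilon)\rangle=|\Psi_x^+(s,\varepsilon)\rangle/\|\,|\Psi_x^+(s,\varepsilon)\rangle\|$. $\Lambda(s,\varepsilon)$ is the orthogonal projection onto $\mathrm{span}\{|\Psi_x^-(s,\varepsilon)\rangle: x\in\mathbb X\}$; $\Pi_x=\sum_i|i,x_i^-\rangle\langle i,x_i^-|\otimes I_{\mathcal W}$, acting as $0$ on $\mathcal H_{\mathcal O}$; $H_x(s,\varepsilon)=\Lambda(s,\varepsilon)-\Pi_x$. $\|\cdot\|$ on operators is the operator norm. *)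

From Stdlib Require Import Reals Lra Lia Arith.
Open Scope R_scope.

Record C : Type := Cmk { cre : R ; cim : R }.
Definition C0 : C := Cmk 0 0.
Definition C1 : C := Cmk 1 0.
Definition RtoC (r : R) : C := Cmk r 0.
Definition Cadd (z w : C) : C := Cmk (cre z + cre w) (cim z + cim w).
Definition Copp (z : C) : C := Cmk (- cre z) (- cim z).
Definition Csub (z w : C) : C := Cadd z (Copp w).
Definition Cmul (z w : C) : C :=
  Cmk (cre z * cre w - cim z * cim w) (cre z * cim w + cim z * cre w).
Definition Cconj (z : C) : C := Cmk (cre z) (- cim z).
Definition Cabs2 (z : C) : R := cre z * cre z + cim z * cim z.

Fixpoint rsum (n : nat) (f : nat -> R) : R :=
  match n with O => 0 | S p => rsum p f + f p end.
Fixpoint csum (n : nat) (f : nat -> C) : C :=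
  match n with O => C0 | S p => Cadd (csum p f) (f p) end.

(* A vector of C^D is a function nat -> C, only coordinates < D matter. *)
Definition vec := nat -> C.
Definition mat := nat -> nat -> C.

Definition vzero : vec := fun _ => C0.
Definition vadd (u v : vec) : vec := fun t => Cadd (u t) (v t).
Definition vsub (u v : vec) : vec := fun t => Csub (u t) (v t).
Definition vscale (c : C) (v : vec) : vec := fun t => Cmul c (v t).
Fixpoint vsum (n : nat) (f : nat -> vec) : vec :=
  match n with O => vzero | S p => vadd (vsum p f) (f p) end.
Definition basis (j : nat) : vec := fun t => if Nat.eqb t j then C1 else C0.

Definition inner (D : nat) (u v : vec) : C := csum D (fun t => Cmul (Cconj (u t)) (v t)).
Definition vnorm (D : nat) (v : vec) : R := sqrt (rsum D (fun t => Cabs2 (v t))).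

Definition mapply (D : nat) (M : mat) (v : vec) : vec :=
  fun i => csum D (fun j => Cmul (M i j) (v j)).
Definition mmul (D : nat) (A B : mat) : mat :=
  fun i j => csum D (fun l => Cmul (A i l) (B l j)).
Definition madd (A B : mat) : mat := fun i j => Cadd (A i j) (B i j).
Definition msub (A B : mat) : mat := fun i j => Csub (A i j) (B i j).
Definition mscale (c : C) (A : mat) : mat := fun i j => Cmul c (A i j).
Fixpoint msum (n : nat) (f : nat -> mat) : mat :=
  match n with O => fun _ _ => C0 | S p => madd (msum p f) (f p) end.
Definition outer (u v : vec) : mat := fun i j => Cmul (u i) (Cconj (v j)).
Definition hadamard (A B : mat) : mat := fun i j => Cmul (A i j) (B i j).
Definition meq (D : nat) (A B : mat) : Prop :=
  forall i j, (i < D)%nat -> (j < D)%nat -> A i j = B i j.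
Definition commutator (D : nat) (A B : mat) : mat := msub (mmul D A B) (mmul D B A).

Definition opnorm_le (D : nat) (A : mat) (c : R) : Prop :=
  forall v : vec, vnorm D (mapply D A v) <= c * vnorm D v.
Definition is_opnorm (D : nat) (A : mat) (r : R) : Prop :=
  0 <= r /\ opnorm_le D A r /\ (forall c, 0 <= c -> opnorm_le D A c -> r <= c).

Definition has_cderiv (f : R -> C) (s : R) (l : C) : Prop :=
  derivable_pt_lim (fun t => cre (f t)) s (cre l) /\
  derivable_pt_lim (fun t => cim (f t)) s (cim l).
Definition has_mderiv (D : nat) (M : R -> mat) (s : R) (M' : mat) : Prop :=
  forall i j, (i < D)%nat -> (j < D)%nat -> has_cderiv (fun t => M t i j) s (M' i j).

(* X is encoded as strs a (a < NX), each a string of length n over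
   Sigma = {0,..,k-1}; the Gram matrices rho, sigma are NX x NX. *)
Definition DeltaM (strs : nat -> nat -> nat) (j : nat) : mat :=
  fun a b => if Nat.eqb (strs a j) (strs b j) then C0 else C1.
Definition gram (d : nat) (vs : nat -> vec) : mat := fun a b => inner d (vs a) (vs b).
Definition hermitian (NX : nat) (G : mat) : Prop :=
  forall a b, (a < NX)%nat -> (b < NX)%nat -> G b a = Cconj (G a b).
Definition adv_feasible (NX n : nat) (strs : nat -> nat -> nat) (G : mat) : Prop :=
  hermitian NX G /\ forall j, (j < n)%nat -> opnorm_le NX (hadamard G (DeltaM strs j)) 1.
Definition is_adv_star (NX n : nat) (strs : nat -> nat -> nat) (rho sigma : mat) (W : R) : Prop :=
  (exists G, adv_feasible NX n strs G /\ is_opnorm NX (hadamard G (msub rho sigma)) W) /\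
  (forall G, adv_feasible NX n strs G -> opnorm_le NX (hadamard G (msub rho sigma)) W).

(* Coordinates: |b,a> in H_O (b<2, a<d) has index b*d + a;
   |i,y> (x) |w> (i<n, y<=k, w<m; y = k encodes 0bar) has index 2d + (i*(k+1)+y)*m + w. *)
Definition dimH (d n k m : nat) : nat := (2 * d + n * (k + 1) * m)%nat.
Definition idxO (d b a : nat) : nat := (b * d + a)%nat.
Definition idxQ (d k m i y w : nat) : nat := (2 * d + (i * (k + 1) + y) * m + w)%nat.

Definition isqrt2 : C := RtoC (/ sqrt 2).
Definition embO (d b : nat) (v : vec) : vec :=
  vsum d (fun a => vscale (v a) (basis (idxO d b a))).
Definition ketQplus (d k m i y : nat) (u : vec) : vec :=
  vsum m (fun w => vscale (Cmul (u w) isqrt2)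
                     (vadd (basis (idxQ d k m i k w)) (basis (idxQ d k m i y w)))).
Definition ketQminus (d k m i y : nat) (u : vec) : vec :=
  vsum m (fun w => vscale (Cmul (u w) isqrt2)
                     (vsub (basis (idxQ d k m i k w)) (basis (idxQ d k m i y w)))).

Definition theta (s : R) : R := PI / 2 * s.
Definition xi (s : R) : R := 2 * cos (theta s) * sin (theta s).

Section Construction.
Variables (d n k m : nat) (W eps : R)
  (strs : nat -> nat -> nat) (rv sv : nat -> vec) (U V : nat -> nat -> vec).

Definition kplus (a : nat) (s : R) : vec :=
  vadd (vscale (RtoC (cos (theta s))) (embO d 0 (rv a)))
       (vscale (RtoC (sin (theta s))) (embO d 1 (sv a))).
Definition kminus (a : nat) (s : R) : vec :=
  vadd (vscale (RtoC (- sin (theta s))) (embO d 0 (rv a)))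
       (vscale (RtoC (cos (theta s))) (embO d 1 (sv a))).
Definition PsiPlus (a : nat) (s : R) : vec :=
  vadd (kplus a s)
       (vscale (RtoC (eps / sqrt W)) (vsum n (fun i => ketQplus d k m i (strs a i) (U a i)))).
Definition PsiMinus (a : nat) (s : R) : vec :=
  vadd (kminus a s)
       (vscale (RtoC (xi s * sqrt W / eps)) (vsum n (fun i => ketQminus d k m i (strs a i) (V a i)))).
Definition Nrm (a : nat) (s : R) : R := vnorm (dimH d n k m) (PsiPlus a s).
Definition psiPlus (a : nat) (s : R) : vec := vscale (RtoC (/ Nrm a s)) (PsiPlus a s).
Definition Pproj (a : nat) (s : R) : mat := outer (psiPlus a s) (psiPlus a s).
Definition Xop (a : nat) (s : R) : mat :=
  mscale (RtoC (PI / (2 * Nrm a s))) (outer (PsiMinus a s) (psiPlus a s)).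
Definition PiX (a : nat) : mat :=
  msum n (fun i => msum m (fun w =>
    let e := ketQminus d k m i (strs a i) (basis w) in outer e e)).
End Construction.

Definition is_span_proj (D NX : nat) (vs : nat -> vec) (L : mat) : Prop :=
  forall v : vec,
    (exists c : nat -> C, forall t, (t < D)%nat ->
        mapply D L v t = csum NX (fun b => Cmul (c b) (vs b t))) /\
    (forall b, (b < NX)%nat -> inner D (vs b) (vsub v (mapply D L v)) = C0).

(* Psi^+_x has constant norm N_x and d/ds Psi^+_x = (pi/2) k^-_x, which is orthogonal to Psi^+_x;
   hence dP/ds P = (pi/(2 N_x)) |k^-_x><psi^+_x|.  The decomposition of rho - sigma by the u's
   and v's makes Psi^+_x orthogonal to every Psi^-_b and to the range of Pi_x, so X H = 0, while
   H Psi^-_x = Psi^-_x - Pi_x Psi^-_x = k^-_x; this gives [H, X] = H X = dP/ds P.  Finally X and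
   dX/ds P are rank one, with norms (pi/(2 N_x)) ||Psi^-_x|| and (pi/(2 N_x)) ||dPsi^-_x/ds||,
   which are bounded using xi^2 <= 1, xi'^2 <= pi^2, sum_i ||v_{x,i}||^2 <= W and W/eps >= 1/2. *)

From Pilot Require Import Defs.
From Stdlib Require Import Reals Lra Lia Arith FunctionalExtensionality ZArith.
From Coquelicot Require Import Coquelicot.
(* Coquelicot's [C] would otherwise shadow the complex numbers of Defs. *)
Import Defs.
Open Scope R_scope.

Lemma C_ext (z w : C) : cre z = cre w -> cim z = cim w -> z = w.
Proof. destruct z, w; simpl; intros; subst; reflexivity. Qed.

Ltac Cring := apply C_ext; simpl; ring.
Ltac Cfield := apply C_ext; simpl; field.

Lemma Cabs2_nonneg (z : C) : 0 <= Cabs2 z.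
Proof. unfold Cabs2; nra. Qed.

Definition Cm1 : C := Cmk (-1) 0.
Definition Csign (b : bool) : C := if b then C1 else Cm1.

(** * Finite sums *)

Lemma csum_ext n f g : (forall i, (i < n)%nat -> f i = g i) -> csum n f = csum n g.
Proof. induction n as [|n IH]; simpl; intros H; auto. rewrite IH, H; auto. Qed.

Lemma rsum_ext n f g : (forall i, (i < n)%nat -> f i = g i) -> rsum n f = rsum n g.
Proof. induction n as [|n IH]; simpl; intros H; auto. rewrite IH, H; auto. Qed.

Lemma csum_add n f g : csum n (fun i => Cadd (f i) (g i)) = Cadd (csum n f) (csum n g).
Proof. induction n as [|n IH]; simpl; [Cring|]. rewrite IH. Cring. Qed.

Lemma csum_scal_l n c f : csum n (fun i => Cmul c (f i)) = Cmul c (csum n f).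
Proof. induction n as [|n IH]; simpl; [Cring|]. rewrite IH. Cring. Qed.

Lemma csum_scal_r n c f : csum n (fun i => Cmul (f i) c) = Cmul (csum n f) c.
Proof. induction n as [|n IH]; simpl; [Cring|]. rewrite IH. Cring. Qed.

Lemma csum_eq0 n f : (forall i, (i < n)%nat -> f i = C0) -> csum n f = C0.
Proof. induction n as [|n IH]; simpl; intros H; auto. rewrite IH, H; auto. Cring. Qed.

Lemma csum_swap n m f :
  csum n (fun i => csum m (fun j => f i j)) = csum m (fun j => csum n (fun i => f i j)).
Proof.
  induction n as [|n IH]; simpl; [symmetry; apply csum_eq0; auto|].
  rewrite IH, <- csum_add. reflexivity.
Qed.

Lemma csum_add_range a b f : csum (a + b) f = Cadd (csum a f) (csum b (fun j => f (a + j)%nat)).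
Proof.
  induction b as [|b IH]; simpl; [rewrite Nat.add_0_r; Cring|].
  rewrite Nat.add_succ_r; simpl. rewrite IH. Cring.
Qed.

Lemma csum_mul_range a b f :
  csum (a * b) f = csum a (fun i => csum b (fun j => f (i * b + j)%nat)).
Proof. induction a as [|a IH]; simpl; auto. rewrite Nat.add_comm, csum_add_range, IH. reflexivity. Qed.

Lemma cre_csum n f : cre (csum n f) = rsum n (fun i => cre (f i)).
Proof. induction n as [|n IH]; simpl; auto. rewrite IH; auto. Qed.

Lemma cim_csum n f : cim (csum n f) = rsum n (fun i => cim (f i)).
Proof. induction n as [|n IH]; simpl; auto. rewrite IH; auto. Qed.

Lemma Cconj_csum n f : Cconj (csum n f) = csum n (fun i => Cconj (f i)).
Proof. induction n as [|n IH]; simpl; [Cring|]. rewrite <- IH. Cring. Qed.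

Lemma csum_RtoC n f : csum n (fun i => RtoC (f i)) = RtoC (rsum n f).
Proof. induction n as [|n IH]; simpl; auto. rewrite IH. Cring. Qed.

Lemma rsum_nonneg n f : (forall i, (i < n)%nat -> 0 <= f i) -> 0 <= rsum n f.
Proof.
  induction n as [|n IH]; simpl; intros H; [lra|].
  assert (0 <= f n) by (apply H; lia). assert (0 <= rsum n f) by (apply IH; auto). lra.
Qed.

Lemma rsum_scal n c f : rsum n (fun i => c * f i) = c * rsum n f.
Proof. induction n as [|n IH]; simpl; [ring|]. rewrite IH. ring. Qed.

Lemma rsum_eq0_nonneg n f : (forall i, (i < n)%nat -> 0 <= f i) -> rsum n f = 0 ->
  forall i, (i < n)%nat -> f i = 0.
Proof.
  induction n as [|n IH]; simpl; intros H Hs i Hi; [lia|].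
  assert (0 <= f n) by (apply H; lia).
  assert (0 <= rsum n f) by (apply rsum_nonneg; auto).
  destruct (Nat.eq_dec i n) as [->|]; [lra|]. apply IH; auto; lra || lia.
Qed.

Lemma csum_shifted_delta n c t g :
  csum n (fun j => Cmul (g j) (if Nat.eqb t (c + j) then C1 else C0)) =
  if andb (Nat.leb c t) (Nat.ltb t (c + n)) then g (t - c)%nat else C0.
Proof.
  induction n as [|n IH]; simpl.
  - destruct (Nat.leb c t) eqn:E1, (Nat.ltb t (c + 0)) eqn:E2; simpl; auto.
    apply Nat.leb_le in E1; apply Nat.ltb_lt in E2; lia.
  - rewrite IH. destruct (Nat.eqb t (c + n)) eqn:E.
    + apply Nat.eqb_eq in E; subst.
      replace (Nat.leb c (c + n)) with true by (symmetry; apply Nat.leb_le; lia).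
      replace (Nat.ltb (c + n) (c + n)) with false by (symmetry; apply Nat.ltb_ge; lia).
      replace (Nat.ltb (c + n) (c + S n)) with true by (symmetry; apply Nat.ltb_lt; lia).
      simpl. replace (c + n - c)%nat with n by lia. Cring.
    + apply Nat.eqb_neq in E.
      destruct (Nat.leb c t) eqn:E1; simpl; [|Cring].
      destruct (Nat.ltb t (c + n)) eqn:E2, (Nat.ltb t (c + S n)) eqn:E3; try Cring.
      * apply Nat.ltb_lt in E2; apply Nat.ltb_ge in E3; lia.
      * apply Nat.ltb_ge in E2; apply Nat.ltb_lt in E3; apply Nat.leb_le in E1; lia.
Qed.

Lemma csum_delta n i g : (i < n)%nat ->
  csum n (fun j => Cmul (g j) (if Nat.eqb i j then C1 else C0)) = g i.
Proof.
  intros Hi. change (csum n (fun j => Cmul (g j) (if Nat.eqb i (0 + j) then C1 else C0)) = g i).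
  rewrite csum_shifted_delta.
  replace (Nat.leb 0 i) with true by (symmetry; apply Nat.leb_le; lia).
  replace (Nat.ltb i (0 + n)) with true by (symmetry; apply Nat.ltb_lt; lia).
  simpl. rewrite Nat.sub_0_r. reflexivity.
Qed.

Lemma csum_if n i g : (i < n)%nat -> csum n (fun j => if Nat.eqb j i then g j else C0) = g i.
Proof.
  intros Hi. rewrite <- (csum_delta n i g Hi). apply csum_ext; intros j _.
  rewrite Nat.eqb_sym. destruct (Nat.eqb i j); Cring.
Qed.

(** * Inner products and norms on C^D *)

Section InnerProduct.
Variable D : nat.

Lemma inner_ext u v u' v' : (forall t, (t < D)%nat -> u t = u' t) ->
  (forall t, (t < D)%nat -> v t = v' t) -> inner D u v = inner D u' v'.
Proof. intros H1 H2. apply csum_ext; intros. rewrite H1, H2; auto. Qed.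

Lemma cre_inner_self v : cre (inner D v v) = rsum D (fun t => Cabs2 (v t)).
Proof. unfold inner. rewrite cre_csum. apply rsum_ext; intros. unfold Cabs2; simpl; ring. Qed.

Lemma cim_inner_self v : cim (inner D v v) = 0.
Proof.
  unfold inner. rewrite cim_csum, <- (Rmult_0_l (rsum D (fun _ => 0))), <- rsum_scal.
  apply rsum_ext; intros; simpl; ring.
Qed.

Lemma inner_self_nonneg v : 0 <= cre (inner D v v).
Proof. rewrite cre_inner_self. apply rsum_nonneg; intros; apply Cabs2_nonneg. Qed.

Lemma vnorm_inner v : vnorm D v = sqrt (cre (inner D v v)).
Proof. unfold vnorm. rewrite cre_inner_self. reflexivity. Qed.

Lemma vnorm_nonneg v : 0 <= vnorm D v.
Proof. apply sqrt_pos. Qed.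

Lemma vnorm_sq v : vnorm D v ^ 2 = cre (inner D v v).
Proof. rewrite vnorm_inner, pow2_sqrt; auto using inner_self_nonneg. Qed.

Lemma inner_self v : inner D v v = RtoC (vnorm D v ^ 2).
Proof. apply C_ext; [rewrite vnorm_sq| rewrite cim_inner_self]; reflexivity. Qed.

Lemma inner_self_unit v : vnorm D v = 1 -> inner D v v = C1.
Proof. intros H. rewrite inner_self, H. Cring. Qed.

Lemma inner_self_eq0 v : cre (inner D v v) = 0 -> forall t, (t < D)%nat -> v t = C0.
Proof.
  rewrite cre_inner_self. intros H t Ht.
  pose proof (rsum_eq0_nonneg D _ (fun i _ => Cabs2_nonneg (v i)) H t Ht) as H0.
  unfold Cabs2 in H0. apply C_ext; simpl; nra.
Qed.

Lemma inner_conj u v : inner D v u = Cconj (inner D u v).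
Proof. unfold inner. rewrite Cconj_csum. apply csum_ext; intros. Cring. Qed.

Lemma inner_add_r u v w : inner D u (vadd v w) = Cadd (inner D u v) (inner D u w).
Proof. unfold inner, vadd. rewrite <- csum_add. apply csum_ext; intros; Cring. Qed.

Lemma inner_scale_r u c v : inner D u (vscale c v) = Cmul c (inner D u v).
Proof. unfold inner, vscale. rewrite <- csum_scal_l. apply csum_ext; intros; Cring. Qed.

Lemma inner_scale_l u c v : inner D (vscale c u) v = Cmul (Cconj c) (inner D u v).
Proof. unfold inner, vscale. rewrite <- csum_scal_l. apply csum_ext; intros; Cring. Qed.

Lemma inner_sub_r u v w : inner D u (vsub v w) = Csub (inner D u v) (inner D u w).
Proof.
  rewrite (inner_ext u (vsub v w) u (vadd v (vscale Cm1 w))) by (intros; unfold vsub, vadd, vscale; Cring).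
  rewrite inner_add_r, inner_scale_r. Cring.
Qed.

Lemma inner_sub_l u v w : inner D (vsub u v) w = Csub (inner D u w) (inner D v w).
Proof. rewrite inner_conj, inner_sub_r, (inner_conj u w), (inner_conj v w). Cring. Qed.

Lemma inner_scale_RtoC b c u v :
  inner D (vscale (RtoC b) u) (vscale (RtoC c) v) = Cmul (RtoC (b * c)) (inner D u v).
Proof. rewrite inner_scale_l, inner_scale_r. Cring. Qed.

Lemma inner_mul_const_r u e z : inner D u (fun t => Cmul (e t) z) = Cmul z (inner D u e).
Proof. rewrite <- inner_scale_r. apply inner_ext; intros; unfold vscale; auto; Cring. Qed.

Lemma inner_lincomb_r u N (c : nat -> C) (f : nat -> vec) :
  inner D u (fun t => csum N (fun b => Cmul (c b) (f b t))) =
  csum N (fun b => Cmul (c b) (inner D u (f b))).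
Proof.
  unfold inner.
  transitivity (csum D (fun t => csum N (fun b => Cmul (c b) (Cmul (Cconj (u t)) (f b t))))).
  - apply csum_ext; intros. rewrite <- csum_scal_l. apply csum_ext; intros; Cring.
  - rewrite csum_swap. apply csum_ext; intros. apply csum_scal_l.
Qed.

Lemma inner_lincomb_l w N (c : nat -> C) (f : nat -> vec) :
  inner D (fun t => csum N (fun b => Cmul (c b) (f b t))) w =
  csum N (fun b => Cmul (Cconj (c b)) (inner D (f b) w)).
Proof.
  rewrite inner_conj, inner_lincomb_r, Cconj_csum.
  apply csum_ext; intros. rewrite (inner_conj (f i) w). Cring.
Qed.

Lemma inner_csum_r u N (F : nat -> vec) :
  inner D u (fun t => csum N (fun b => F b t)) = csum N (fun b => inner D u (F b)).
Proof.
  rewrite (inner_ext u _ u (fun t => csum N (fun b => Cmul C1 (F b t)))) by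
    (auto; intros; apply csum_ext; intros; Cring).
  rewrite inner_lincomb_r. apply csum_ext; intros; Cring.
Qed.

Lemma inner_basis_l w g : (w < D)%nat -> inner D (basis w) g = g w.
Proof.
  intros Hw. rewrite <- (csum_delta D w g Hw). apply csum_ext; intros t _.
  unfold basis. rewrite (Nat.eqb_sym w t). destruct (Nat.eqb t w); Cring.
Qed.

Lemma inner_vzero_l g : inner D vzero g = C0.
Proof. apply csum_eq0; intros; Cring. Qed.

Lemma vnorm_ext u v : (forall t, (t < D)%nat -> u t = v t) -> vnorm D u = vnorm D v.
Proof. intros. rewrite !vnorm_inner, (inner_ext u u v v); auto. Qed.

Lemma vnorm_mul_const a z : vnorm D (fun t => Cmul (a t) z) = sqrt (Cabs2 z) * vnorm D a.
Proof.
  rewrite !vnorm_inner, <- sqrt_mult by (apply Cabs2_nonneg || apply inner_self_nonneg).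
  f_equal. rewrite !cre_inner_self, <- rsum_scal. apply rsum_ext; intros. unfold Cabs2; simpl; ring.
Qed.

Lemma vnorm_scale_RtoC c a : vnorm D (vscale (RtoC c) a) = Rabs c * vnorm D a.
Proof.
  rewrite (vnorm_ext _ (fun t => Cmul (a t) (RtoC c))) by (intros; unfold vscale; Cring).
  rewrite vnorm_mul_const. f_equal. unfold Cabs2, RtoC; simpl.
  rewrite Rmult_0_r, Rplus_0_r. apply sqrt_Rsqr_abs.
Qed.

Lemma Cabs2_inner_le b v : inner D b b = C1 -> Cabs2 (inner D b v) <= cre (inner D v v).
Proof.
  intros Hb. set (z := inner D b v).
  assert (E : inner D (vsub v (vscale z b)) (vsub v (vscale z b)) =
              Csub (inner D v v) (RtoC (Cabs2 z))).
  { rewrite inner_sub_l, !inner_sub_r, !inner_scale_l, !inner_scale_r, Hb, (inner_conj b v).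
    fold z. unfold Cabs2, RtoC. Cring. }
  pose proof (inner_self_nonneg (vsub v (vscale z b))) as H. rewrite E in H. simpl in H. lra.
Qed.

End InnerProduct.

(** * Matrices *)

Section Matrices.
Variable D : nat.

Lemma mapply_outer a b v t : mapply D (outer a b) v t = Cmul (a t) (inner D b v).
Proof. unfold mapply, outer, inner. rewrite <- csum_scal_l. apply csum_ext; intros; Cring. Qed.

Lemma mapply_msub A B v t : mapply D (msub A B) v t = Csub (mapply D A v t) (mapply D B v t).
Proof.
  unfold mapply, msub.
  transitivity (csum D (fun j => Cadd (Cmul (A t j) (v j)) (Cmul Cm1 (Cmul (B t j) (v j))))).
  - apply csum_ext; intros; Cring.
  - rewrite csum_add, csum_scal_l. Cring.
Qed.

Lemma mapply_msum N f v t : mapply D (msum N f) v t = csum N (fun i => mapply D (f i) v t).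
Proof.
  induction N as [|N IH]; simpl; [apply csum_eq0; intros; Cring|].
  rewrite <- IH. unfold mapply, madd. rewrite <- csum_add. apply csum_ext; intros; Cring.
Qed.

Lemma mapply_basis L j l : (j < D)%nat -> mapply D L (basis j) l = L l j.
Proof.
  intros Hj. rewrite <- (csum_delta D j (L l) Hj). apply csum_ext; intros t _.
  unfold basis. rewrite (Nat.eqb_sym j t). reflexivity.
Qed.

Lemma mapply_meq A B v t : meq D A B -> (t < D)%nat -> mapply D A v t = mapply D B v t.
Proof. intros H Ht. apply csum_ext; intros. rewrite H; auto. Qed.

Lemma mmul_outer_l B a b i j : mmul D (outer a b) B i j = Cmul (a i) (inner D b (fun l => B l j)).
Proof. unfold mmul, outer, inner. rewrite <- csum_scal_l. apply csum_ext; intros; Cring. Qed.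

Lemma mmul_outer_r A a b i j : mmul D A (outer a b) i j = Cmul (mapply D A a i) (Cconj (b j)).
Proof. unfold mmul, outer, mapply. rewrite <- csum_scal_r. apply csum_ext; intros; Cring. Qed.

Lemma mmul_mscale_l c A B i j : mmul D (mscale c A) B i j = Cmul c (mmul D A B i j).
Proof. unfold mmul, mscale. rewrite <- csum_scal_l. apply csum_ext; intros; Cring. Qed.

Lemma mmul_mscale_r c A B i j : mmul D A (mscale c B) i j = Cmul c (mmul D A B i j).
Proof. unfold mmul, mscale. rewrite <- csum_scal_l. apply csum_ext; intros; Cring. Qed.

Lemma mmul_madd_l A1 A2 B i j : mmul D (madd A1 A2) B i j = Cadd (mmul D A1 B i j) (mmul D A2 B i j).
Proof. unfold mmul, madd. rewrite <- csum_add. apply csum_ext; intros; Cring. Qed.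

Lemma is_opnorm_meq A B r : meq D A B -> is_opnorm D A r -> is_opnorm D B r.
Proof.
  intros H [H0 [H1 H2]].
  assert (E : forall v, vnorm D (mapply D A v) = vnorm D (mapply D B v))
    by (intros; apply vnorm_ext; intros; apply mapply_meq; auto).
  split; [auto| split].
  - intros v. rewrite <- E. auto.
  - intros c Hc Hop. apply H2; auto. intros v. rewrite E. auto.
Qed.

Lemma is_opnorm_outer a b : inner D b b = C1 -> is_opnorm D (outer a b) (vnorm D a).
Proof.
  intros Hb. split; [apply vnorm_nonneg| split].
  - intros v. rewrite (vnorm_ext D _ (fun t => Cmul (a t) (inner D b v))) by (intros; apply mapply_outer).
    rewrite vnorm_mul_const, Rmult_comm. apply Rmult_le_compat_l; [apply vnorm_nonneg|].
    rewrite vnorm_inner. apply sqrt_le_1; auto using Cabs2_nonneg, inner_self_nonneg, Cabs2_inner_le.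
  - intros c Hc Hop. specialize (Hop b).
    rewrite (vnorm_ext D _ (fun t => Cmul (a t) (inner D b b))) in Hop by (intros; apply mapply_outer).
    rewrite vnorm_mul_const, (vnorm_inner D b), Hb in Hop. unfold Cabs2 in Hop; simpl in Hop.
    replace (1 * 1 + 0 * 0) with 1 in Hop by ring. rewrite sqrt_1 in Hop. lra.
Qed.

Lemma is_opnorm_outer_scale c a b : 0 <= c -> inner D b b = C1 ->
  is_opnorm D (outer (vscale (RtoC c) a) b) (c * vnorm D a).
Proof.
  intros Hc Hb. replace (c * vnorm D a) with (vnorm D (vscale (RtoC c) a))
    by (rewrite vnorm_scale_RtoC, Rabs_pos_eq; auto).
  apply is_opnorm_outer, Hb.
Qed.

Lemma is_span_proj_fixes NX vs L a : (a < NX)%nat -> is_span_proj D NX vs L ->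
  forall t, (t < D)%nat -> mapply D L (vs a) t = vs a t.
Proof.
  intros Ha HL. destruct (HL (vs a)) as [[c Hc] Ho].
  set (r := vsub (vs a) (mapply D L (vs a))).
  assert (E : cre (inner D r r) = 0).
  { unfold r at 1. rewrite inner_sub_l, Ho by auto.
    rewrite (inner_ext D _ r (fun t => csum NX (fun b => Cmul (c b) (vs b t))) r), inner_lincomb_l by auto.
    rewrite csum_eq0; [simpl; ring|]. intros b Hb. rewrite Ho by auto. Cring. }
  intros t Ht. pose proof (inner_self_eq0 D r E t Ht) as H0. unfold r, vsub in H0.
  apply C_ext; [apply (f_equal cre) in H0 | apply (f_equal cim) in H0]; simpl in H0; lra.
Qed.

End Matrices.

(** * Derivatives of complex-valued functions *)

Lemma cderiv_ext f g s l : (forall t, f t = g t) -> has_cderiv f s l -> has_cderiv g s l.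
Proof. intros H. replace g with f by (apply functional_extensionality; auto). auto. Qed.

Lemma cderiv_eq f s l l' : l = l' -> has_cderiv f s l -> has_cderiv f s l'.
Proof. intros ->; auto. Qed.

Lemma cderiv_const z s : has_cderiv (fun _ => z) s C0.
Proof. split; simpl; apply derivable_pt_lim_const. Qed.

Lemma cderiv_add f g s a b : has_cderiv f s a -> has_cderiv g s b ->
  has_cderiv (fun t => Cadd (f t) (g t)) s (Cadd a b).
Proof.
  intros [H1 H2] [H3 H4]. split; simpl.
  - apply (derivable_pt_lim_plus (fun t => cre (f t)) (fun t => cre (g t))); auto.
  - apply (derivable_pt_lim_plus (fun t => cim (f t)) (fun t => cim (g t))); auto.
Qed.

Lemma cderiv_mul f g s a b : has_cderiv f s a -> has_cderiv g s b ->
  has_cderiv (fun t => Cmul (f t) (g t)) s (Cadd (Cmul a (g s)) (Cmul (f s) b)).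
Proof.
  intros [H1 H2] [H3 H4]. split; simpl.
  - replace (cre a * cre (g s) - cim a * cim (g s) + (cre (f s) * cre b - cim (f s) * cim b))
      with (cre a * cre (g s) + cre (f s) * cre b - (cim a * cim (g s) + cim (f s) * cim b)) by ring.
    apply (derivable_pt_lim_minus (fun t => cre (f t) * cre (g t)) (fun t => cim (f t) * cim (g t)));
      apply derivable_pt_lim_mult; auto.
  - replace (cre a * cim (g s) + cim a * cre (g s) + (cre (f s) * cim b + cim (f s) * cre b))
      with (cre a * cim (g s) + cre (f s) * cim b + (cim a * cre (g s) + cim (f s) * cre b)) by ring.
    apply (derivable_pt_lim_plus (fun t => cre (f t) * cim (g t)) (fun t => cim (f t) * cre (g t)));
      apply derivable_pt_lim_mult; auto.
Qed.

Lemma cderiv_conj f s a : has_cderiv f s a -> has_cderiv (fun t => Cconj (f t)) s (Cconj a).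
Proof. intros [H1 H2]. split; simpl; auto. apply (derivable_pt_lim_opp (fun t => cim (f t))); auto. Qed.

Lemma cderiv_scal z f s a : has_cderiv f s a -> has_cderiv (fun t => Cmul z (f t)) s (Cmul z a).
Proof. intros H. eapply cderiv_eq; [|apply cderiv_mul; [apply cderiv_const|exact H]]. Cring. Qed.

Lemma cderiv_real_scal (h : R -> R) h' z s : derivable_pt_lim h s h' ->
  has_cderiv (fun t => Cmul (RtoC (h t)) z) s (Cmul (RtoC h') z).
Proof.
  intros H. assert (Hh : has_cderiv (fun t => RtoC (h t)) s (RtoC h'))
    by (split; simpl; [exact H| apply derivable_pt_lim_const]).
  eapply cderiv_eq; [|apply cderiv_mul; [apply Hh|apply cderiv_const]]. Cring.
Qed.

(** * Coordinates on H = H_O (+) (H_Q (x) H_W) *)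

Lemma vsum_eval n f t : vsum n f t = csum n (fun i => f i t).
Proof. induction n as [|n IH]; simpl; auto. unfold vadd. rewrite IH. reflexivity. Qed.

Lemma inner_dimH_split d n k m u v :
  inner (dimH d n k m) u v =
  Cadd (Cadd (inner d (fun a => u (idxO d 0 a)) (fun a => v (idxO d 0 a)))
             (inner d (fun a => u (idxO d 1 a)) (fun a => v (idxO d 1 a))))
       (csum n (fun i => csum (k + 1) (fun y =>
          inner m (fun w => u (idxQ d k m i y w)) (fun w => v (idxQ d k m i y w))))).
Proof.
  unfold inner, dimH. replace (2 * d)%nat with (d + d)%nat by lia.
  rewrite !csum_add_range, !csum_mul_range. f_equal; [f_equal|].
  all: repeat (apply csum_ext; intros); unfold idxO, idxQ.
  all: match goal with |- Cmul _ (?f ?a) = Cmul _ (?f ?b) => replace a with b by lia end; reflexivity.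
Qed.

Ltac nat_cases := repeat match goal with
 | |- context [Nat.leb ?a ?b] => let E := fresh in
     destruct (Nat.leb a b) eqn:E; [apply Nat.leb_le in E | apply Nat.leb_gt in E]
 | |- context [Nat.ltb ?a ?b] => let E := fresh in
     destruct (Nat.ltb a b) eqn:E; [apply Nat.ltb_lt in E | apply Nat.ltb_ge in E]
 | |- context [Nat.eqb ?a ?b] => let E := fresh in
     destruct (Nat.eqb a b) eqn:E; [apply Nat.eqb_eq in E | apply Nat.eqb_neq in E]
 end; simpl.

Lemma embO_eval d b v t :
  embO d b v t = if andb (Nat.leb (b * d) t) (Nat.ltb t (b * d + d)) then v (t - b * d)%nat else C0.
Proof. unfold embO. rewrite vsum_eval, <- csum_shifted_delta. reflexivity. Qed.

Lemma embO_idxO d b b' v a : (b <= 1)%nat -> (b' <= 1)%nat -> (a < d)%nat ->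
  embO d b v (idxO d b' a) = if Nat.eqb b b' then v a else C0.
Proof.
  intros. rewrite embO_eval. unfold idxO.
  destruct b as [|[|]], b' as [|[|]]; try lia; nat_cases; try lia; try reflexivity; f_equal; lia.
Qed.

Lemma embO_idxQ d k m b v i y w : (b <= 1)%nat -> embO d b v (idxQ d k m i y w) = C0.
Proof. intros. rewrite embO_eval. unfold idxQ. nat_cases; auto; nia. Qed.

(* [ketQ_coeff k x y sg] is the |y>-coordinate of |0bar> + sg |x>, where 0bar is encoded as k. *)
Definition ketQ_coeff (k x y : nat) (sg : C) : C :=
  Cadd (if Nat.eqb k y then C1 else C0) (Cmul sg (if Nat.eqb x y then C1 else C0)).

(* ketQplus and ketQminus of the construction are ketQ true and ketQ false, by conversion. *)
Definition ketQ d k m i y (sg : bool) (u : vec) : vec :=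
  vsum m (fun w => vscale (Cmul (u w) isqrt2)
    (if sg then vadd (basis (idxQ d k m i k w)) (basis (idxQ d k m i y w))
           else vsub (basis (idxQ d k m i k w)) (basis (idxQ d k m i y w)))).

Definition Qsum d k m n (sg : bool) (st : nat -> nat) (g : nat -> vec) : vec :=
  vsum n (fun i => ketQ d k m i (st i) sg (g i)).

Lemma ketQ_eval d k m i y sg u t :
  ketQ d k m i y sg u t =
  Cadd (csum m (fun w => Cmul (Cmul (u w) isqrt2)
                  (if Nat.eqb t ((2 * d + (i * (k + 1) + k) * m) + w) then C1 else C0)))
       (Cmul (Csign sg) (csum m (fun w => Cmul (Cmul (u w) isqrt2)
                  (if Nat.eqb t ((2 * d + (i * (k + 1) + y) * m) + w) then C1 else C0)))).
Proof.
  unfold ketQ. rewrite vsum_eval, <- csum_scal_l, <- csum_add. apply csum_ext; intros.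
  unfold idxQ, vscale, vadd, vsub, basis, Csign, Cm1. destruct sg; Cring.
Qed.

Lemma nat_mul_add_inj a q r a' r' : (a * q + r = a' * q + r')%nat -> (r < q)%nat -> (r' < q)%nat ->
  a = a' /\ r = r'.
Proof. intros. assert (a = a') by nia. subst. lia. Qed.

Lemma idxQ_block d k m i y i' y' w' : (y < k + 1)%nat -> (y' < k + 1)%nat -> (w' < m)%nat ->
  andb (Nat.leb (2 * d + (i * (k + 1) + y) * m) (idxQ d k m i' y' w'))
       (Nat.ltb (idxQ d k m i' y' w') (2 * d + (i * (k + 1) + y) * m + m))
  = andb (Nat.eqb i i') (Nat.eqb y y').
Proof.
  intros. unfold idxQ. apply Bool.eq_iff_eq_true.
  rewrite !Bool.andb_true_iff, Nat.leb_le, Nat.ltb_lt, !Nat.eqb_eq. split.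
  - intros [H3 H4]. assert (i' * (k + 1) + y' = i * (k + 1) + y)%nat by nia.
    destruct (nat_mul_add_inj i' (k + 1) y' i y) as [-> ->]; auto.
  - intros [-> ->]. nia.
Qed.

Lemma ketQ_idxQ d k m i y sg u i' y' w' : (y < k)%nat -> (y' < k + 1)%nat -> (w' < m)%nat ->
  ketQ d k m i y sg u (idxQ d k m i' y' w') =
  if Nat.eqb i i' then Cmul (Cmul (u w') isqrt2) (ketQ_coeff k y y' (Csign sg)) else C0.
Proof.
  intros. rewrite ketQ_eval, !csum_shifted_delta, !idxQ_block by lia.
  unfold ketQ_coeff, Csign, Cm1. destruct (Nat.eqb i i') eqn:E; simpl.
  - apply Nat.eqb_eq in E; subst.
    destruct (Nat.eqb k y') eqn:E1, (Nat.eqb y y') eqn:E2;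
      try apply Nat.eqb_eq in E1; try apply Nat.eqb_eq in E2; subst; try lia;
      try match goal with |- context [(?a - ?b)%nat] =>
            replace (a - b)%nat with w' by (unfold idxQ; lia) end;
      destruct sg; Cring.
  - destruct sg; Cring.
Qed.

Lemma ketQ_idxO d k m i y sg u t : (t < 2 * d)%nat -> ketQ d k m i y sg u t = C0.
Proof.
  intros. rewrite ketQ_eval, !csum_shifted_delta.
  nat_cases; try lia; unfold Csign, Cm1; destruct sg; Cring.
Qed.

Lemma Qsum_idxQ d k m n sg st g i' y' w' : (forall i, (i < n)%nat -> (st i < k)%nat) ->
  (i' < n)%nat -> (y' < k + 1)%nat -> (w' < m)%nat ->
  Qsum d k m n sg st g (idxQ d k m i' y' w') =
  Cmul (Cmul (g i' w') isqrt2) (ketQ_coeff k (st i') y' (Csign sg)).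
Proof.
  intros Hst Hi Hy Hw. unfold Qsum. rewrite vsum_eval.
  rewrite <- (csum_if n i' (fun i => Cmul (Cmul (g i w') isqrt2) (ketQ_coeff k (st i) y' (Csign sg)))) by auto.
  apply csum_ext; intros i Hi'. rewrite ketQ_idxQ, Nat.eqb_sym by auto. reflexivity.
Qed.

Lemma Qsum_idxO d k m n sg st g t : (t < 2 * d)%nat -> Qsum d k m n sg st g t = C0.
Proof. intros. unfold Qsum. rewrite vsum_eval. apply csum_eq0; intros. apply ketQ_idxO; auto. Qed.

(* The coordinates of p0 |0,r> + p1 |1,s> + sum_i |i, (0bar + sg st_i)/sqrt 2> |f_i>. *)
Definition in_block_form d n k m (u : vec) (p0 : C) (r : vec) (p1 : C) (s : vec)
    (f : nat -> vec) (sg : C) (st : nat -> nat) : Prop :=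
  (forall a, (a < d)%nat -> u (idxO d 0 a) = Cmul p0 (r a)) /\
  (forall a, (a < d)%nat -> u (idxO d 1 a) = Cmul p1 (s a)) /\
  (forall i y w, (i < n)%nat -> (y < k + 1)%nat -> (w < m)%nat ->
      u (idxQ d k m i y w) = Cmul (Cmul (f i w) isqrt2) (ketQ_coeff k (st i) y sg)).

Lemma isqrt2_abs2 : Cmul (Cconj isqrt2) isqrt2 = RtoC (/ 2).
Proof.
  unfold isqrt2, RtoC. apply C_ext; simpl; [|ring].
  rewrite <- Rinv_mult, sqrt_sqrt by lra. ring.
Qed.

Lemma ketQ_coeff_inner k x x' sg sg' : (x < k)%nat -> (x' < k)%nat ->
  csum (k + 1) (fun y => Cmul (Cconj (ketQ_coeff k x y sg)) (ketQ_coeff k x' y sg')) =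
  Cadd C1 (Cmul (Cconj sg) (Cmul sg' (if Nat.eqb x x' then C1 else C0))).
Proof.
  intros. rewrite Nat.add_1_r. simpl. unfold ketQ_coeff at 3 4.
  rewrite Nat.eqb_refl.
  replace (Nat.eqb x k) with false by (symmetry; apply Nat.eqb_neq; lia).
  replace (Nat.eqb x' k) with false by (symmetry; apply Nat.eqb_neq; lia).
  rewrite (csum_ext k _ (fun y => Cmul (Cmul (Cconj sg) (Cmul sg' (if Nat.eqb x' y then C1 else C0)))
                                       (if Nat.eqb x y then C1 else C0))).
  - rewrite csum_delta, (Nat.eqb_sym x' x) by auto. destruct (Nat.eqb x x'); Cring.
  - intros y Hy. unfold ketQ_coeff.
    replace (Nat.eqb k y) with false by (symmetry; apply Nat.eqb_neq; lia).
    destruct (Nat.eqb x y), (Nat.eqb x' y); Cring.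
Qed.

Lemma inner_block_form {d n k m u v p0 r p1 s f sg st p0' r' p1' s' f' sg' st'} :
  (forall i, (i < n)%nat -> (st i < k)%nat) -> (forall i, (i < n)%nat -> (st' i < k)%nat) ->
  in_block_form d n k m u p0 r p1 s f sg st -> in_block_form d n k m v p0' r' p1' s' f' sg' st' ->
  inner (dimH d n k m) u v =
  Cadd (Cadd (Cmul (Cconj p0) (Cmul p0' (inner d r r'))) (Cmul (Cconj p1) (Cmul p1' (inner d s s'))))
    (csum n (fun i => Cmul (inner m (f i) (f' i))
        (Cmul (RtoC (/ 2)) (Cadd C1 (Cmul (Cconj sg) (Cmul sg' (if Nat.eqb (st i) (st' i) then C1 else C0))))))).
Proof.
  intros Hst Hst' [U0 [U1 UQ]] [V0 [V1 VQ]].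
  rewrite inner_dimH_split. f_equal; [f_equal|].
  - rewrite (inner_ext d _ _ (vscale p0 r) (vscale p0' r')), inner_scale_l, inner_scale_r by auto.
    reflexivity.
  - rewrite (inner_ext d _ _ (vscale p1 s) (vscale p1' s')), inner_scale_l, inner_scale_r by auto.
    reflexivity.
  - apply csum_ext; intros i Hi.
    rewrite <- (ketQ_coeff_inner k (st i) (st' i) sg sg'), <- !csum_scal_l by auto.
    apply csum_ext; intros y Hy.
    rewrite (inner_ext m _ _ (vscale (Cmul isqrt2 (ketQ_coeff k (st i) y sg)) (f i))
                             (vscale (Cmul isqrt2 (ketQ_coeff k (st' i) y sg')) (f' i)))
      by (intros; rewrite ?UQ, ?VQ by auto; unfold vscale; Cring).
    rewrite inner_scale_l, inner_scale_r, <- isqrt2_abs2. Cring.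
Qed.

Definition block_vec d k m n (c0 c1 : R) (r s : vec) (c2 : R) (sg : bool)
    (st : nat -> nat) (g : nat -> vec) : vec :=
  vadd (vadd (vscale (RtoC c0) (embO d 0 r)) (vscale (RtoC c1) (embO d 1 s)))
       (vscale (RtoC c2) (Qsum d k m n sg st g)).

Lemma block_vec_form {d k m n c0 c1 r s c2 sg st g} : (forall i, (i < n)%nat -> (st i < k)%nat) ->
  in_block_form d n k m (block_vec d k m n c0 c1 r s c2 sg st g) (RtoC c0) r (RtoC c1) s
     (fun i => vscale (RtoC c2) (g i)) (Csign sg) st.
Proof.
  intros Hst. unfold block_vec, in_block_form, vadd, vscale. split; [|split]; intros.
  - rewrite !embO_idxO, Qsum_idxO by (unfold idxO; lia). simpl. Cring.
  - rewrite !embO_idxO, Qsum_idxO by (unfold idxO; lia). simpl. Cring.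
  - rewrite !embO_idxQ, Qsum_idxQ by (auto; lia). Cring.
Qed.

Lemma inner_block_vec d n k m c0 c1 c2 c0' c1' c2' r s sg st g :
  (forall i, (i < n)%nat -> (st i < k)%nat) -> vnorm d r = 1 -> vnorm d s = 1 ->
  inner (dimH d n k m) (block_vec d k m n c0 c1 r s c2 sg st g) (block_vec d k m n c0' c1' r s c2' sg st g) =
  RtoC (c0 * c0' + c1 * c1' + c2 * c2' * rsum n (fun i => vnorm m (g i) ^ 2)).
Proof.
  intros Hst Hr Hs.
  rewrite (inner_block_form Hst Hst
             (block_vec_form Hst) (block_vec_form Hst)).
  rewrite !inner_self_unit by auto.
  rewrite (csum_ext _ _ (fun i => RtoC (c2 * c2' * vnorm m (g i) ^ 2))), csum_RtoC, rsum_scal; [Cring|].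
  intros i Hi. rewrite inner_scale_RtoC, Nat.eqb_refl, inner_self.
  unfold Csign, Cm1; destruct sg; Cfield.
Qed.

(** * The angle theta and the coefficient xi *)

Definition xi_deriv (s : R) : R := PI * (cos (theta s) ^ 2 - sin (theta s) ^ 2).

Lemma derivable_cos_theta s : derivable_pt_lim (fun t => cos (theta t)) s (- sin (theta s) * (PI / 2)).
Proof. apply is_derive_Reals. unfold theta. auto_derive; auto. ring. Qed.

Lemma derivable_sin_theta s : derivable_pt_lim (fun t => sin (theta t)) s (cos (theta s) * (PI / 2)).
Proof. apply is_derive_Reals. unfold theta. auto_derive; auto. ring. Qed.

Lemma derivable_opp_sin_theta s :
  derivable_pt_lim (fun t => - sin (theta t)) s (- cos (theta s) * (PI / 2)).
Proof. apply is_derive_Reals. unfold theta. auto_derive; auto. ring. Qed.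

Lemma derivable_xi_scal c e s : derivable_pt_lim (fun t => xi t * c / e) s (xi_deriv s * c / e).
Proof.
  apply is_derive_Reals. unfold xi, xi_deriv, theta. auto_derive; auto.
  unfold Rdiv. generalize (/ e); intro. simpl. field.
Qed.

Lemma sin2_cos2_theta s : sin (theta s) ^ 2 + cos (theta s) ^ 2 = 1.
Proof. pose proof (sin2_cos2 (theta s)) as H. unfold Rsqr in H. lra. Qed.

(* Both bounds come from (cos^2 - sin^2)^2 + (2 cos sin)^2 = (cos^2 + sin^2)^2 = 1. *)
Lemma double_angle_sq s :
  (cos (theta s) ^ 2 - sin (theta s) ^ 2) ^ 2 + (2 * cos (theta s) * sin (theta s)) ^ 2 = 1.
Proof. rewrite <- (pow1 2), <- (sin2_cos2_theta s) at 1. ring. Qed.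

Lemma xi_sq_le_1 s : xi s ^ 2 <= 1.
Proof.
  pose proof (double_angle_sq s). pose proof (pow2_ge_0 (cos (theta s) ^ 2 - sin (theta s) ^ 2)).
  unfold xi. lra.
Qed.

Lemma xi_deriv_sq_le s : xi_deriv s ^ 2 <= PI ^ 2.
Proof.
  pose proof (double_angle_sq s). pose proof (pow2_ge_0 (2 * cos (theta s) * sin (theta s))).
  unfold xi_deriv. rewrite Rpow_mult_distr. pose proof (pow2_ge_0 PI). nra.
Qed.

Lemma pow2_le_reg a b : 0 <= b -> a ^ 2 <= b ^ 2 -> a <= b.
Proof. intros. nra. Qed.

Lemma INR_fact_IZR n z : Z.of_nat (Factorial.fact n) = z -> INR (Factorial.fact n) = IZR z.
Proof. intros <-. apply INR_IZR_INZ. Qed.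

(* If PI > 63/20 then cos (63/40) > 0, contradicting the Taylor upper bound cos_approx (63/40) 4 < 0. *)
Lemma PI_le_63_20 : PI <= 63 / 20.
Proof.
  destruct (Rle_lt_dec PI (63 / 20)) as [H|H]; auto. exfalso.
  assert (cos (63 / 40) > 0) by (apply cos_gt_0; lra).
  assert (Hc : cos (63 / 40) <= cos_approx (63 / 40) (2 * (1 + 1))) by (apply (cos_bound _ 1); lra).
  unfold cos_approx, cos_term in Hc. cbn [sum_f_R0 Nat.mul Nat.add] in Hc.
  rewrite (INR_fact_IZR 0 1), (INR_fact_IZR 2 2), (INR_fact_IZR 4 24), (INR_fact_IZR 6 720),
    (INR_fact_IZR 8 40320) in Hc by (vm_compute; reflexivity).
  simpl pow in Hc. lra.
Qed.

Lemma PI_sqrt_bound : PI * sqrt 5 + PI ^ 2 / sqrt 2 <= 15.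
Proof.
  pose proof PI_le_63_20. pose proof PI_RGT_0.
  pose proof (sqrt_pos 5). pose proof (sqrt_pos 2).
  pose proof (pow2_sqrt 5 ltac:(lra)). pose proof (pow2_sqrt 2 ltac:(lra)).
  assert (S5 : sqrt 5 <= 22361 / 10000) by nra.
  assert (S2 : 1414 / 1000 <= sqrt 2) by nra.
  assert (PI ^ 2 / sqrt 2 <= 7018 / 1000).
  { apply Rmult_le_reg_r with (sqrt 2); [lra|].
    unfold Rdiv. rewrite Rmult_assoc, Rinv_l by lra. nra. }
  nra.
Qed.

Lemma opnorm_bounds_sum_le r1 r2 w : 0 <= w ->
  r1 <= PI * sqrt 5 / 2 * w -> r2 <= PI ^ 2 / sqrt 2 * w -> 2 * r1 + r2 <= 15 * w.
Proof. intros. pose proof PI_sqrt_bound. nra. Qed.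

(** * The vectors Psi^+, Psi^- and the operators P, X *)

Section AdiaConvert.
Variables (d n k m NX x : nat) (W eps : R) (strs : nat -> nat -> nat)
  (rv sv : nat -> vec) (U V : nat -> nat -> vec).
Hypothesis strs_lt : forall a j, (a < NX)%nat -> (j < n)%nat -> (strs a j < k)%nat.
Hypothesis x_lt : (x < NX)%nat.
Hypothesis rv_unit : vnorm d (rv x) = 1.
Hypothesis sv_unit : vnorm d (sv x) = 1.
Hypothesis W_pos : 0 < W.
Hypothesis eps_pos : 0 < eps.

Local Notation D := (dimH d n k m).
Local Notation PsiP := (PsiPlus d n k m W eps strs rv sv U).
Local Notation PsiM := (PsiMinus d n k m W eps strs rv sv V).
Local Notation psiP := (psiPlus d n k m W eps strs rv sv U x).
Local Notation kM := (kminus d rv sv x).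
Local Notation P := (Pproj d n k m W eps strs rv sv U x).
Local Notation X := (Xop d n k m W eps strs rv sv U V x).
Local Notation Pi_x := (PiX d n k m strs x).

Lemma strs_x_lt i : (i < n)%nat -> (strs x i < k)%nat.
Proof. auto. Qed.

Lemma PsiPlus_block b s :
  PsiP b s = block_vec d k m n (cos (theta s)) (sin (theta s)) (rv b) (sv b) (eps / sqrt W) true (strs b) (U b).
Proof. reflexivity. Qed.

Lemma PsiMinus_block b s :
  PsiM b s = block_vec d k m n (- sin (theta s)) (cos (theta s)) (rv b) (sv b) (xi s * sqrt W / eps) false
               (strs b) (V b).
Proof. reflexivity. Qed.

(* As c2 = 0, the sign and the u's are arbitrary; they are chosen to match Psi^+_x. *)
Lemma kminus_block s :
  kM s = block_vec d k m n (- sin (theta s)) (cos (theta s)) (rv x) (sv x) 0 true (strs x) (U x).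
Proof. apply functional_extensionality; intros t. unfold kminus, block_vec, vadd, vscale. Cring. Qed.

Definition dPsiMinus (s : R) : vec :=
  block_vec d k m n (- cos (theta s) * (PI / 2)) (- sin (theta s) * (PI / 2)) (rv x) (sv x)
    (xi_deriv s * sqrt W / eps) false (strs x) (V x).

Definition Nx : R := sqrt (1 + (eps / sqrt W) ^ 2 * rsum n (fun i => vnorm m (U x i) ^ 2)).

Lemma Nx_sq_ge_1 : 1 <= 1 + (eps / sqrt W) ^ 2 * rsum n (fun i => vnorm m (U x i) ^ 2).
Proof.
  pose proof (pow2_ge_0 (eps / sqrt W)).
  pose proof (rsum_nonneg n (fun i => vnorm m (U x i) ^ 2) (fun i _ => pow2_ge_0 _)). nra.
Qed.

Lemma Nx_ge_1 : 1 <= Nx.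
Proof. rewrite <- sqrt_1. apply sqrt_le_1_alt, Nx_sq_ge_1. Qed.

Lemma inner_PsiPlus_self s : inner D (PsiP x s) (PsiP x s) = RtoC (Nx ^ 2).
Proof.
  rewrite PsiPlus_block, inner_block_vec by (auto using strs_x_lt).
  unfold Nx. rewrite pow2_sqrt by (pose proof Nx_sq_ge_1; lra).
  pose proof (sin2_cos2_theta s). f_equal. nra.
Qed.

Lemma Nrm_eq s : Nrm d n k m W eps strs rv sv U x s = Nx.
Proof.
  unfold Nrm. rewrite vnorm_inner, inner_PsiPlus_self. simpl.
  rewrite Rmult_1_r. apply sqrt_square. pose proof Nx_ge_1. lra.
Qed.

Lemma psiPlus_eq s : psiP s = vscale (RtoC (/ Nx)) (PsiP x s).
Proof. unfold psiPlus. rewrite Nrm_eq. reflexivity. Qed.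

Lemma psiPlus_unit s : inner D (psiP s) (psiP s) = C1.
Proof.
  pose proof Nx_ge_1. rewrite psiPlus_eq, inner_scale_RtoC, inner_PsiPlus_self.
  apply C_ext; simpl; field; lra.
Qed.

Lemma kminus_orth_PsiPlus s : inner D (kM s) (PsiP x s) = C0.
Proof.
  rewrite kminus_block, PsiPlus_block, inner_block_vec by (auto using strs_x_lt). Cring.
Qed.

(* The Q-part contributes (xi/2) (<rho_x|rho_b> - <sigma_x|sigma_b>), cancelling the H_O-part. *)
Lemma PsiPlus_orth_PsiMinus b s (Hb : (b < NX)%nat)
  (Hdec : Csub (gram d rv x b) (gram d sv x b) =
          csum n (fun i => Cmul (DeltaM strs i x b) (inner m (U x i) (V b i)))) :
  inner D (PsiP x s) (PsiM b s) = C0.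
Proof.
  assert (Hbk : forall i, (i < n)%nat -> (strs b i < k)%nat) by auto.
  rewrite PsiPlus_block, PsiMinus_block.
  rewrite (inner_block_form strs_x_lt Hbk
             (block_vec_form strs_x_lt) (block_vec_form Hbk)).
  rewrite (csum_ext _ _ (fun i => Cmul (RtoC (xi s / 2)) (Cmul (DeltaM strs i x b) (inner m (U x i) (V b i))))).
  - rewrite csum_scal_l, <- Hdec. unfold gram, xi. Cfield.
  - intros i Hi. rewrite inner_scale_RtoC.
    replace (eps / sqrt W * (xi s * sqrt W / eps)) with (xi s)
      by (pose proof (sqrt_lt_R0 W W_pos); field; lra).
    unfold DeltaM, Csign, Cm1. destruct (Nat.eqb (strs x i) (strs x i)), (Nat.eqb (strs x i) (strs b i)); Cfield.
Qed.

Definition pi_vec (i w : nat) : vec := ketQminus d k m i (strs x i) (basis w).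

Lemma pi_vec_form i w : (i < n)%nat ->
  in_block_form d n k m (pi_vec i w) C0 (rv x) C0 (rv x) (fun i' => if Nat.eqb i i' then basis w else vzero)
    Cm1 (strs x).
Proof.
  intros Hi. unfold pi_vec. change (ketQminus d k m i (strs x i) (basis w)) with (ketQ d k m i (strs x i) false (basis w)).
  split; [|split]; intros.
  1, 2: rewrite ketQ_idxO by (unfold idxO; lia); Cring.
  rewrite ketQ_idxQ by auto using strs_x_lt.
  destruct (Nat.eqb i i0) eqn:E; [apply Nat.eqb_eq in E; subst; reflexivity| unfold vzero; Cring].
Qed.

Lemma PsiPlus_orth_pi_vec s i w : (i < n)%nat -> inner D (PsiP x s) (pi_vec i w) = C0.
Proof.
  intros Hi. rewrite PsiPlus_block.
  rewrite (inner_block_form strs_x_lt strs_x_lt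
             (block_vec_form strs_x_lt) (pi_vec_form i w Hi)).
  rewrite csum_eq0; [Cring|]. intros j Hj. rewrite Nat.eqb_refl. unfold Csign, Cm1. Cring.
Qed.

Lemma inner_pi_vec_PsiMinus s i w : (i < n)%nat -> (w < m)%nat ->
  inner D (pi_vec i w) (PsiM x s) = Cmul (RtoC (xi s * sqrt W / eps)) (V x i w).
Proof.
  intros Hi Hw. rewrite PsiMinus_block.
  rewrite (inner_block_form strs_x_lt strs_x_lt
             (pi_vec_form i w Hi) (block_vec_form strs_x_lt)).
  rewrite (csum_ext _ _ (fun j => if Nat.eqb j i then Cmul (RtoC (xi s * sqrt W / eps)) (V x i w) else C0)).
  - rewrite csum_if by auto. Cring.
  - intros j Hj. rewrite Nat.eqb_refl, (Nat.eqb_sym j i). destruct (Nat.eqb i j) eqn:E.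
    + apply Nat.eqb_eq in E; subst. rewrite inner_scale_r, inner_basis_l by auto.
      unfold Csign, Cm1. apply C_ext; simpl; field; lra.
    + rewrite inner_vzero_l. Cring.
Qed.

Lemma mapply_PiX v t :
  mapply D Pi_x v t = csum n (fun i => csum m (fun w => Cmul (pi_vec i w t) (inner D (pi_vec i w) v))).
Proof.
  unfold PiX. rewrite mapply_msum. apply csum_ext; intros i _.
  rewrite mapply_msum. apply csum_ext; intros w _. apply mapply_outer.
Qed.

Lemma pi_vec_eval i w t : (w < m)%nat ->
  pi_vec i w t = Cmul isqrt2 (Csub (basis (idxQ d k m i k w) t) (basis (idxQ d k m i (strs x i) w) t)).
Proof.
  intros Hw. unfold pi_vec, ketQminus. rewrite vsum_eval.
  rewrite <- (csum_delta m w (fun w' => Cmul isqrt2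
      (Csub (basis (idxQ d k m i k w') t) (basis (idxQ d k m i (strs x i) w') t)))) by auto.
  apply csum_ext; intros w' _. unfold vscale, vsub, basis at 1. rewrite (Nat.eqb_sym w w').
  destruct (Nat.eqb w' w); Cring.
Qed.

Lemma PiX_PsiMinus s t :
  mapply D Pi_x (PsiM x s) t = Cmul (RtoC (xi s * sqrt W / eps)) (Qsum d k m n false (strs x) (V x) t).
Proof.
  rewrite mapply_PiX. unfold Qsum. rewrite vsum_eval, <- csum_scal_l.
  apply csum_ext; intros i Hi. unfold ketQ. rewrite vsum_eval, <- csum_scal_l.
  apply csum_ext; intros w Hw. rewrite inner_pi_vec_PsiMinus, pi_vec_eval by auto.
  unfold vscale, vsub. Cring.
Qed.

Lemma PsiPlus_deriv s t : has_cderiv (fun s' => PsiP x s' t) s (Cmul (RtoC (PI / 2)) (kM s t)).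
Proof.
  unfold PsiPlus, kplus, vadd, vscale.
  eapply cderiv_eq.
  2: { apply cderiv_add; [apply cderiv_add|].
       - apply (cderiv_real_scal (fun t => cos (theta t))), derivable_cos_theta.
       - apply (cderiv_real_scal (fun t => sin (theta t))), derivable_sin_theta.
       - apply (cderiv_real_scal (fun _ => eps / sqrt W)), derivable_pt_lim_const. }
  unfold kminus, vadd, vscale. Cring.
Qed.

Lemma PsiMinus_deriv s t : has_cderiv (fun s' => PsiM x s' t) s (dPsiMinus s t).
Proof.
  unfold PsiMinus, kminus, dPsiMinus, block_vec, vadd, vscale.
  apply cderiv_add; [apply cderiv_add|].
  - apply (cderiv_real_scal (fun t => - sin (theta t))), derivable_opp_sin_theta.
  - apply (cderiv_real_scal (fun t => cos (theta t))), derivable_cos_theta.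
  - apply (cderiv_real_scal (fun t => xi t * sqrt W / eps)), derivable_xi_scal.
Qed.

Definition dpsiPlus (s : R) : vec := vscale (RtoC (PI / (2 * Nx))) (kM s).

Lemma psiPlus_deriv s t : has_cderiv (fun s' => psiP s' t) s (dpsiPlus s t).
Proof.
  apply (cderiv_ext (fun s' => Cmul (RtoC (/ Nx)) (PsiP x s' t))); [intros; rewrite psiPlus_eq; reflexivity|].
  eapply cderiv_eq; [|apply cderiv_scal, PsiPlus_deriv].
  pose proof Nx_ge_1. unfold dpsiPlus, vscale. apply C_ext; simpl; field; lra.
Qed.

Lemma dpsiPlus_orth s : inner D (dpsiPlus s) (psiP s) = C0.
Proof. unfold dpsiPlus. rewrite psiPlus_eq, inner_scale_RtoC, kminus_orth_PsiPlus. Cring. Qed.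

Definition Pderiv (s : R) : mat := madd (outer (dpsiPlus s) (psiP s)) (outer (psiP s) (dpsiPlus s)).

Lemma Pproj_deriv s : has_mderiv D P s (Pderiv s).
Proof.
  intros i j _ _. unfold Pproj, Pderiv, madd, outer.
  eapply cderiv_eq; [|apply cderiv_mul; [apply psiPlus_deriv | apply cderiv_conj, psiPlus_deriv]].
  reflexivity.
Qed.

Lemma mmul_outer_Pproj a b s i j :
  mmul D (outer a b) (P s) i j = Cmul (a i) (Cmul (inner D b (psiP s)) (Cconj (psiP s j))).
Proof.
  rewrite mmul_outer_l. unfold Pproj.
  change (fun l => outer (psiP s) (psiP s) l j) with (fun l => Cmul (psiP s l) (Cconj (psiP s j))).
  rewrite inner_mul_const_r. Cring.
Qed.

Lemma Pderiv_mul_Pproj s i j : mmul D (Pderiv s) (P s) i j = Cmul (dpsiPlus s i) (Cconj (psiP s j)).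
Proof. unfold Pderiv. rewrite mmul_madd_l, !mmul_outer_Pproj, psiPlus_unit, dpsiPlus_orth. Cring. Qed.

Lemma Xop_eq s : X s = mscale (RtoC (PI / (2 * Nx))) (outer (PsiM x s) (psiP s)).
Proof. unfold Xop. rewrite Nrm_eq. reflexivity. Qed.

Section SpanProjection.
Variables (s : R) (L : mat).
Hypothesis L_proj : is_span_proj D NX (fun b => PsiM b s) L.
Hypothesis gram_decomp : forall b, (b < NX)%nat ->
  Csub (gram d rv x b) (gram d sv x b) = csum n (fun i => Cmul (DeltaM strs i x b) (inner m (U x i) (V b i))).

Local Notation H := (msub L Pi_x).

(* L fixes Psi^-_x, and Pi_x removes exactly its Q-part. *)
Lemma H_PsiMinus t : (t < D)%nat -> mapply D H (PsiM x s) t = kM s t.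
Proof.
  intros Ht. rewrite mapply_msub, (is_span_proj_fixes D NX _ L x x_lt L_proj t Ht), PiX_PsiMinus.
  unfold PsiMinus, vadd, vscale. change (vsum n _) with (Qsum d k m n false (strs x) (V x)). Cring.
Qed.

Lemma psiPlus_orth_H j : (j < D)%nat -> inner D (psiP s) (fun l => H l j) = C0.
Proof.
  intros Hj. destruct (L_proj (basis j)) as [[c Hc] _].
  assert (Hrange : inner D (psiP s) (mapply D L (basis j)) = C0).
  { rewrite (inner_ext D _ _ _ (fun t => csum NX (fun b => Cmul (c b) (PsiM b s t)))), inner_lincomb_r
      by auto.
    apply csum_eq0; intros b Hb. rewrite psiPlus_eq, inner_scale_l, PsiPlus_orth_PsiMinus by auto. Cring. }
  assert (HPi : inner D (psiP s) (mapply D Pi_x (basis j)) = C0).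
  { rewrite (inner_ext D (psiP s) _ (psiP s) _ (fun t _ => eq_refl) (fun t _ => mapply_PiX (basis j) t)).
    rewrite inner_csum_r.
    apply csum_eq0; intros i Hi. rewrite inner_csum_r. apply csum_eq0; intros w Hw.
    rewrite inner_mul_const_r, psiPlus_eq, inner_scale_l, PsiPlus_orth_pi_vec by auto. Cring. }
  rewrite (inner_ext D _ _ (psiP s) (vsub (mapply D L (basis j)) (mapply D Pi_x (basis j))))
    by (auto; intros; unfold vsub, msub; rewrite !mapply_basis; auto).
  rewrite inner_sub_r, Hrange, HPi. Cring.
Qed.

Lemma Xop_mul_H j : (j < D)%nat -> forall i, mmul D (X s) H i j = C0.
Proof. intros Hj i. rewrite Xop_eq, mmul_mscale_l, mmul_outer_l, psiPlus_orth_H by auto. Cring. Qed.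

Lemma commutator_H_Xop : meq D (commutator D H (X s)) (mmul D H (X s)).
Proof.
  intros i j Hi Hj. unfold commutator.
  change (msub (mmul D H (X s)) (mmul D (X s) H) i j) with (Csub (mmul D H (X s) i j) (mmul D (X s) H i j)).
  rewrite Xop_mul_H by auto. Cring.
Qed.

Lemma H_mul_Xop : meq D (mmul D H (X s)) (mmul D (Pderiv s) (P s)).
Proof.
  intros i j Hi Hj. rewrite Pderiv_mul_Pproj, Xop_eq, mmul_mscale_r, mmul_outer_r, H_PsiMinus by auto.
  unfold dpsiPlus, vscale. Cring.
Qed.

End SpanProjection.
Definition Xderiv (s : R) : mat :=
  mscale (RtoC (PI / (2 * Nx))) (madd (outer (dPsiMinus s) (psiP s)) (outer (PsiM x s) (dpsiPlus s))).

Lemma Xop_deriv s : has_mderiv D X s (Xderiv s).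
Proof.
  intros i j _ _.
  apply (cderiv_ext (fun t => Cmul (RtoC (PI / (2 * Nx))) (Cmul (PsiM x t i) (Cconj (psiP t j)))));
    [intros; rewrite Xop_eq; reflexivity|].
  eapply cderiv_eq; [|apply cderiv_scal, cderiv_mul; [apply PsiMinus_deriv | apply cderiv_conj, psiPlus_deriv]].
  reflexivity.
Qed.

Lemma is_opnorm_Xop s : is_opnorm D (X s) (PI / (2 * Nx) * vnorm D (PsiM x s)).
Proof.
  pose proof Nx_ge_1. pose proof PI_RGT_0.
  apply (is_opnorm_meq D (outer (vscale (RtoC (PI / (2 * Nx))) (PsiM x s)) (psiP s))).
  - intros i j _ _. rewrite Xop_eq. unfold mscale, outer, vscale. Cring.
  - apply is_opnorm_outer_scale; [apply Rlt_le, Rdiv_lt_0_compat; lra| apply psiPlus_unit].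
Qed.

Lemma is_opnorm_Xderiv_Pproj s : is_opnorm D (mmul D (Xderiv s) (P s)) (PI / (2 * Nx) * vnorm D (dPsiMinus s)).
Proof.
  pose proof Nx_ge_1. pose proof PI_RGT_0.
  apply (is_opnorm_meq D (outer (vscale (RtoC (PI / (2 * Nx))) (dPsiMinus s)) (psiP s))).
  - intros i j _ _. unfold Xderiv.
    rewrite mmul_mscale_l, mmul_madd_l, !mmul_outer_Pproj, psiPlus_unit, dpsiPlus_orth.
    unfold outer, vscale. Cring.
  - apply is_opnorm_outer_scale; [apply Rlt_le, Rdiv_lt_0_compat; lra| apply psiPlus_unit].
Qed.

Lemma vnorm_PsiMinus_sq s :
  vnorm D (PsiM x s) ^ 2 = 1 + (xi s * sqrt W / eps) ^ 2 * rsum n (fun i => vnorm m (V x i) ^ 2).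
Proof.
  rewrite vnorm_sq, PsiMinus_block, inner_block_vec by auto using strs_x_lt. simpl.
  pose proof (sin2_cos2_theta s). nra.
Qed.

Lemma vnorm_dPsiMinus_sq s :
  vnorm D (dPsiMinus s) ^ 2 = PI ^ 2 / 4 + (xi_deriv s * sqrt W / eps) ^ 2 * rsum n (fun i => vnorm m (V x i) ^ 2).
Proof.
  unfold dPsiMinus. rewrite vnorm_sq, inner_block_vec by auto using strs_x_lt. simpl.
  pose proof (sin2_cos2_theta s). nra.
Qed.

Section Bounds.
Hypothesis V_bound : rsum n (fun i => vnorm m (V x i) ^ 2) <= W.
Hypothesis W_ge_half_eps : eps / 2 <= W.

(* The assumption W >= eps/2 lets the constant term A be absorbed into (W/eps)^2. *)
Lemma coeff_sq_bound A B z : 0 <= A -> z ^ 2 <= B ->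
  A + (z * sqrt W / eps) ^ 2 * rsum n (fun i => vnorm m (V x i) ^ 2) <= (4 * A + B) * (W / eps) ^ 2.
Proof.
  intros HA Hz. pose proof V_bound as HSW. set (S := rsum n _) in *.
  assert (HS : 0 <= S) by (apply rsum_nonneg; intros; apply pow2_ge_0).
  assert (Hw : 1 / 2 <= W / eps) by (apply Rmult_le_reg_r with eps; [lra|]; field_simplify; lra).
  replace ((z * sqrt W / eps) ^ 2 * S) with (z ^ 2 * S * (W / eps ^ 2))
    by (unfold Rdiv; rewrite !Rpow_mult_distr, pow2_sqrt, pow_inv by lra; ring).
  assert (z ^ 2 * S <= B * W) by (pose proof (pow2_ge_0 z); nra).
  assert (0 < W / eps ^ 2) by (apply Rdiv_lt_0_compat; nra).
  replace ((4 * A + B) * (W / eps) ^ 2) with (4 * A * (W / eps) ^ 2 + B * W * (W / eps ^ 2)) by (field; lra).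
  assert (1 / 4 <= (W / eps) ^ 2) by nra.
  assert (A <= 4 * A * (W / eps) ^ 2) by nra.
  assert (z ^ 2 * S * (W / eps ^ 2) <= B * W * (W / eps ^ 2)) by (apply Rmult_le_compat_r; lra).
  lra.
Qed.

Lemma vnorm_PsiMinus_le s : vnorm D (PsiM x s) <= sqrt 5 * (W / eps).
Proof.
  apply pow2_le_reg; [apply Rmult_le_pos; [apply sqrt_pos| apply Rlt_le, Rdiv_lt_0_compat; lra]|].
  rewrite vnorm_PsiMinus_sq, Rpow_mult_distr, pow2_sqrt by lra.
  replace 5 with (4 * 1 + 1) by ring. apply coeff_sq_bound; [lra| apply xi_sq_le_1].
Qed.

Lemma vnorm_dPsiMinus_le s : vnorm D (dPsiMinus s) <= sqrt 2 * PI * (W / eps).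
Proof.
  pose proof PI_RGT_0.
  apply pow2_le_reg; [apply Rmult_le_pos; [apply Rmult_le_pos; [apply sqrt_pos| lra]| apply Rlt_le, Rdiv_lt_0_compat; lra]|].
  rewrite vnorm_dPsiMinus_sq, !Rpow_mult_distr, pow2_sqrt by lra.
  replace (2 * PI ^ 2) with (4 * (PI ^ 2 / 4) + PI ^ 2) by field.
  apply coeff_sq_bound; [nra| apply xi_deriv_sq_le].
Qed.

Lemma opnorm_Xop_le s : PI / (2 * Nx) * vnorm D (PsiM x s) <= PI * sqrt 5 / 2 * (W / eps).
Proof.
  pose proof Nx_ge_1. pose proof PI_RGT_0. pose proof (vnorm_nonneg D (PsiM x s)).
  apply Rle_trans with (PI / 2 * (sqrt 5 * (W / eps))); [|right; field; lra].
  apply Rmult_le_compat; auto using vnorm_PsiMinus_le.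
  - apply Rlt_le, Rdiv_lt_0_compat; lra.
  - apply Rmult_le_compat_l; [lra| apply Rinv_le_contravar; lra].
Qed.

Lemma opnorm_Xderiv_Pproj_le s : PI / (2 * Nx) * vnorm D (dPsiMinus s) <= PI ^ 2 / sqrt 2 * (W / eps).
Proof.
  pose proof Nx_ge_1. pose proof PI_RGT_0. pose proof (vnorm_nonneg D (dPsiMinus s)).
  pose proof (sqrt_lt_R0 2 ltac:(lra)). pose proof (sqrt_sqrt 2 ltac:(lra)) as Hsqrt2.
  apply Rle_trans with (PI / 2 * (sqrt 2 * PI * (W / eps))).
  - apply Rmult_le_compat; auto using vnorm_dPsiMinus_le.
    + apply Rlt_le, Rdiv_lt_0_compat; lra.
    + apply Rmult_le_compat_l; [lra| apply Rinv_le_contravar; lra].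
  - right. replace (PI ^ 2 / sqrt 2) with (PI ^ 2 * sqrt 2 / (sqrt 2 * sqrt 2)) by (field; lra).
    rewrite Hsqrt2. field. lra.
Qed.

End Bounds.

End AdiaConvert.

Theorem mainTheorem10
  (k n NX d m : nat) (strs : nat -> nat -> nat)
  (rv sv : nat -> vec) (U V : nat -> nat -> vec) (W eps : R) (x : nat)
  (Hn : (1 <= n)%nat)
  (Hstrs : forall a j, (a < NX)%nat -> (j < n)%nat -> (strs a j < k)%nat)
  (Hdistinct : forall a b, (a < NX)%nat -> (b < NX)%nat -> a <> b ->
                 exists j, (j < n)%nat /\ strs a j <> strs b j)
  (Hrv : forall a, (a < NX)%nat -> vnorm d (rv a) = 1)
  (Hsv : forall a, (a < NX)%nat -> vnorm d (sv a) = 1)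
  (HW : is_adv_star NX n strs (gram d rv) (gram d sv) W)
  (HWpos : 0 < W)
  (Hdec : forall a b, (a < NX)%nat -> (b < NX)%nat ->
     Csub (gram d rv a b) (gram d sv a b) =
     csum n (fun i => Cmul (DeltaM strs i a b) (inner m (U a i) (V b i))))
  (HU : forall a, (a < NX)%nat -> rsum n (fun i => vnorm m (U a i) ^ 2) <= W)
  (HV : forall a, (a < NX)%nat -> rsum n (fun i => vnorm m (V a i) ^ 2) <= W)
  (Heps : 0 < eps <= 1)
  (Hx : (x < NX)%nat) :
  let D := dimH d n k m in
  let P := Pproj d n k m W eps strs rv sv U x in
  let X := Xop d n k m W eps strs rv sv U V x in
  (forall s, 0 <= s <= 1 -> forall L : mat,
     is_span_proj D NX (fun b => PsiMinus d n k m W eps strs rv sv V b s) L ->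
     let H := msub L (PiX d n k m strs x) in
     meq D (commutator D H (X s)) (mmul D H (X s)) /\
     exists P', has_mderiv D P s P' /\ meq D (mmul D H (X s)) (mmul D P' (P s))) /\
  (eps / 2 <= W ->
   forall s, 0 <= s <= 1 ->
     exists X' r1 r2,
       has_mderiv D X s X' /\
       is_opnorm D (X s) r1 /\ is_opnorm D (mmul D X' (P s)) r2 /\
       r1 <= PI * sqrt 5 / 2 * (W / eps) /\
       r2 <= PI ^ 2 / sqrt 2 * (W / eps) /\
       2 * r1 + r2 <= 15 * (W / eps)).
Proof.
  intros D P X. pose proof (Hrv x Hx) as Hrx. pose proof (Hsv x Hx) as Hsx.
  assert (Hdec_x : forall b, (b < NX)%nat -> Csub (gram d rv x b) (gram d sv x b) =
            csum n (fun i => Cmul (DeltaM strs i x b) (inner m (U x i) (V b i)))) by auto.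
  split.
  - intros s _ L HL H. split.
    + apply (commutator_H_Xop d n k m NX x W eps strs rv sv U V); auto; lra.
    + exists (Pderiv d n k m x W eps strs rv sv U s). split.
      * apply (Pproj_deriv d n k m NX x); auto.
      * apply (H_mul_Xop d n k m NX x W eps strs rv sv U V); auto; lra.
  - intros Hhalf s _.
    pose proof (opnorm_Xop_le d n k m NX x W eps strs rv sv U V Hstrs Hx
                  ltac:(auto) ltac:(auto) HWpos (proj1 Heps) (HV x Hx) Hhalf s) as B1.
    pose proof (opnorm_Xderiv_Pproj_le d n k m NX x W eps strs rv sv U V Hstrs Hx
                  ltac:(auto) ltac:(auto) HWpos (proj1 Heps) (HV x Hx) Hhalf s) as B2.
    do 3 eexists. split; [|split; [|split; [|split; [exact B1| split; [exact B2|]]]]].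
    + apply (Xop_deriv d n k m NX x); auto.
    + apply (is_opnorm_Xop d n k m NX x); auto.
    + apply (is_opnorm_Xderiv_Pproj d n k m NX x); auto.
    + apply opnorm_bounds_sum_le; auto. apply Rlt_le, Rdiv_lt_0_compat; lra.
Qed.
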